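(* Let $\alpha,\beta,\gamma,\varepsilon>0$, $0<\mu<1$, $\eta>1$, $\eta_D>1$, and consider the system of ODEs for $x=(V,S,D)$: \[ \dot V=\alpha(1-\mu)V\,\Omega(x)-\varepsilon V,\qquad \dot S=\beta VS\,\theta(x)-\varepsilon S,\qquad \dot D=(\alpha\mu+\gamma D)V\,\theta(x)-\varepsilon D, \] where $\Omega(x)=1-V-\eta S-\eta_D D$ and $\theta(x)=1-V-S-D$. Set $\sigma=1-\frac{\varepsilon}{\alpha(1-\mu)}$ and assume $\mu<1-\frac{\varepsilon}{\alpha}$ (equivalently $\sigma>0$). Let $\mathcal U=\{(V,S,D): V,S,D\ge0,\ V+S+D\le1\}$. Then a point $Q=(V_2,S_2,D_2)$ with $V_2,S_2,D_2>0$ is an equilibrium point of the system if and only if $Q\in\mathcal U$ and the following hold: (i) $D_2=\dfrac{\alpha\mu}{\beta-\gamma}$, which necessarily requires $\beta>\gamma$; moreover necessarily $D_2<\sigma/\eta_D$; (ii) $0<V_2<\sigma$ is a root of $V^2+MV+m=0$, where \[ M=\frac{\sigma-(\eta_D-\eta)D_2-\eta}{\eta-1},\qquad m=\frac{\eta\varepsilon}{\beta(\eta-1)}>0, \] i.e. $V_2=V_2^{\pm}=\frac{-M\pm\sqrt{M^2-4m}}{2}$, provided $M^2-4m\ge0$; (iii) $0<S_2<1$ is given by $S_2=1-V_2-D_2-\dfrac{\varepsilon}{\beta V_2}$.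
   Context: $V$, $S$, $D$ are the normalised concentrations of a helper virus, a satellite RNA, and defective interfering RNAs respectively; a point $Q$ with all three components positive is called a coexistence equilibrium. An equilibrium point is a zero of the right-hand side of the system. *)

From Stdlib Require Import Reals.
Open Scope R_scope.

Definition Omega (eta etaD V S D : R) : R := 1 - V - eta * S - etaD * D.
Definition theta (V S D : R) : R := 1 - V - S - D.

Definition fV (alpha mu eps eta etaD V S D : R) : R :=
  alpha * (1 - mu) * V * Omega eta etaD V S D - eps * V.
Definition fS (beta eps V S D : R) : R :=
  beta * V * S * theta V S D - eps * S.
Definition fD (alpha mu gamma eps V S D : R) : R :=
  (alpha * mu + gamma * D) * V * theta V S D - eps * D.

Definition is_equilibrium (alpha beta gamma eps mu eta etaD V S D : R) : Prop :=
  fV alpha mu eps eta etaD V S D = 0 /\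
  fS beta eps V S D = 0 /\
  fD alpha mu gamma eps V S D = 0.

Definition in_U (V S D : R) : Prop :=
  0 <= V /\ 0 <= S /\ 0 <= D /\ V + S + D <= 1.

Definition sigmaVSD (alpha mu eps : R) : R := 1 - eps / (alpha * (1 - mu)).

Definition Mcoef (alpha mu eps eta etaD D2 : R) : R :=
  (sigmaVSD alpha mu eps - (etaD - eta) * D2 - eta) / (eta - 1).

Definition mcoef (beta eps eta : R) : R := eta * eps / (beta * (eta - 1)).

From Stdlib Require Import Reals Lra.
Open Scope R_scope.

(* For V, S > 0 the first two equations say exactly Omega = eps / (alpha (1 - mu)) = 1 - sigma
   and theta = eps / (beta V).  On that level set of theta the third equation becomes
   (eps / beta) (alpha mu - (beta - gamma) D) = 0, which pins down D.  Eliminating S from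
   Omega = 1 - sigma with theta = eps / (beta V) and multiplying by V / (eta - 1) gives the
   quadratic V^2 + M V + m = 0, whose roots are read off from (2 V + M)^2 = M^2 - 4 m.
   The bounds on V and D come from V + eta S + eta_D D = sigma with positive summands. *)

Lemma mul_sub_eq0_iff (c x y e : R) :
  c <> 0 -> x <> 0 -> c * x * y - e * x = 0 <-> y = e / c.
Proof.
  intros Hc Hx. split; intros H.
  - replace (c * x * y - e * x) with (x * (c * y - e)) in H by ring.
    destruct (Rmult_integral _ _ H) as [Hx0 | Hy]; [contradiction|].
    replace y with (c * y / c) by (field; auto).
    now replace (c * y) with e by lra.
  - subst y. field. auto.
Qed.

Lemma theta_level_iff (beta eps V S D : R) :
  theta V S D = eps / (beta * V) <-> S = 1 - V - D - eps / (beta * V).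
Proof. unfold theta. lra. Qed.

Lemma fD_on_theta_level (alpha beta gamma mu eps V S D : R) :
  beta <> 0 -> V <> 0 -> S = 1 - V - D - eps / (beta * V) ->
  fD alpha mu gamma eps V S D = eps / beta * (alpha * mu - D * (beta - gamma)).
Proof. intros Hb HV HS. unfold fD. rewrite (proj2 (theta_level_iff _ _ _ _ _) HS). field. auto. Qed.

Lemma equilibrium_iff_levels (alpha beta gamma eps mu eta etaD V S D : R) :
  alpha * (1 - mu) <> 0 -> 0 < beta -> 0 < eps -> 0 < V -> 0 < S ->
  is_equilibrium alpha beta gamma eps mu eta etaD V S D <->
  Omega eta etaD V S D = 1 - sigmaVSD alpha mu eps /\
  S = 1 - V - D - eps / (beta * V) /\
  D * (beta - gamma) = alpha * mu.
Proof.
  intros Hc Hb He HV HS.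
  assert (HbV : beta * V <> 0) by nra.
  assert (Hk : 1 - sigmaVSD alpha mu eps = eps / (alpha * (1 - mu)))
    by (unfold sigmaVSD; ring).
  assert (Hscale : eps / beta <> 0) by (apply Rgt_not_eq, Rdiv_lt_0_compat; lra).
  unfold is_equilibrium, fV, fS.
  rewrite Hk, (mul_sub_eq0_iff _ V) by lra.
  rewrite (mul_sub_eq0_iff (beta * V) S), theta_level_iff by lra.
  split; intros (HO & HT & HD); repeat split; auto.
  - rewrite (fD_on_theta_level _ beta) in HD by (auto; lra).
    destruct (Rmult_integral _ _ HD); [contradiction | lra].
  - rewrite (fD_on_theta_level _ beta), HD by (auto; lra). ring.
Qed.

Lemma Omega_level_quadratic_identity (alpha beta eps mu eta etaD V S D : R) :
  eta <> 1 -> beta <> 0 -> V <> 0 -> S = 1 - V - D - eps / (beta * V) ->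
  V * (Omega eta etaD V S D - (1 - sigmaVSD alpha mu eps)) =
  (eta - 1) * (V ^ 2 + Mcoef alpha mu eps eta etaD D * V + mcoef beta eps eta).
Proof.
  intros Heta Hb HV HS. subst S.
  unfold Omega, Mcoef, mcoef.
  set (sg := sigmaVSD alpha mu eps).
  field. repeat split; auto; lra.
Qed.

Lemma Omega_level_iff_quadratic (alpha beta eps mu eta etaD V S D : R) :
  eta <> 1 -> beta <> 0 -> V <> 0 -> S = 1 - V - D - eps / (beta * V) ->
  Omega eta etaD V S D = 1 - sigmaVSD alpha mu eps <->
  V ^ 2 + Mcoef alpha mu eps eta etaD D * V + mcoef beta eps eta = 0.
Proof.
  intros Heta Hb HV HS.
  pose proof (Omega_level_quadratic_identity alpha beta eps mu eta etaD V S D Heta Hb HV HS)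
    as Hid.
  split; intros H.
  - rewrite H, Rminus_diag, Rmult_0_r in Hid.
    destruct (Rmult_integral _ _ (eq_sym Hid)); [lra | auto].
  - rewrite H, Rmult_0_r in Hid.
    destruct (Rmult_integral _ _ Hid); [contradiction | lra].
Qed.

Lemma Omega_level_bounds (eta etaD V S D sg : R) :
  0 < eta -> 0 < etaD -> 0 < V -> 0 < S -> 0 < D ->
  Omega eta etaD V S D = 1 - sg -> V < sg /\ D < sg / etaD.
Proof.
  unfold Omega. intros Heta HetaD HV HS HD HO. split.
  - nra.
  - apply (Rmult_lt_reg_r etaD); [lra|].
    unfold Rdiv. rewrite Rmult_assoc, Rinv_l by lra. nra.
Qed.

Lemma D_level_iff (alpha mu beta gamma D : R) :
  0 < alpha * mu -> 0 < D ->
  D * (beta - gamma) = alpha * mu <-> gamma < beta /\ D = alpha * mu / (beta - gamma).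
Proof.
  intros Ham HD. split.
  - intros H.
    assert (Hgb : gamma < beta) by nra.
    split; [auto|]. rewrite <- H. field. lra.
  - intros (Hgb & ->). field. lra.
Qed.

Lemma mcoef_pos (beta eps eta : R) : 0 < beta -> 0 < eps -> 1 < eta -> 0 < mcoef beta eps eta.
Proof.
  intros Hb He Heta. unfold mcoef. apply Rdiv_lt_0_compat; [nra | apply Rmult_lt_0_compat; lra].
Qed.

Lemma quadratic_roots (b c x : R) :
  x ^ 2 + b * x + c = 0 ->
  0 <= b ^ 2 - 4 * c /\
  (x = (- b + sqrt (b ^ 2 - 4 * c)) / 2 \/ x = (- b - sqrt (b ^ 2 - 4 * c)) / 2).
Proof.
  intros H.
  replace (b ^ 2 - 4 * c) with ((2 * x + b) ^ 2) by nra.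
  split; [apply pow2_ge_0|].
  rewrite <- Rsqr_pow2, sqrt_Rsqr_abs.
  unfold Rabs. destruct (Rcase_abs (2 * x + b)); [right | left]; lra.
Qed.

Theorem proposition2
  (alpha beta gamma eps mu eta etaD : R)
  (Halpha : 0 < alpha) (Hbeta : 0 < beta) (Hgamma : 0 < gamma) (Heps : 0 < eps)
  (Hmu0 : 0 < mu) (Hmu1 : mu < 1) (Heta : 1 < eta) (HetaD : 1 < etaD)
  (Hmu : mu < 1 - eps / alpha)
  (V2 S2 D2 : R) (HV2 : 0 < V2) (HS2 : 0 < S2) (HD2 : 0 < D2) :
  let sg := sigmaVSD alpha mu eps in
  let M := Mcoef alpha mu eps eta etaD D2 in
  let m := mcoef beta eps eta in
  is_equilibrium alpha beta gamma eps mu eta etaD V2 S2 D2 <->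
  (in_U V2 S2 D2 /\
   (* (i) *)
   gamma < beta /\ D2 = alpha * mu / (beta - gamma) /\ D2 < sg / etaD /\
   (* (ii) *)
   0 < m /\ 0 < V2 /\ V2 < sg /\ V2 ^ 2 + M * V2 + m = 0 /\
   0 <= M ^ 2 - 4 * m /\
   (V2 = (- M + sqrt (M ^ 2 - 4 * m)) / 2 \/ V2 = (- M - sqrt (M ^ 2 - 4 * m)) / 2) /\
   (* (iii) *)
   0 < S2 /\ S2 < 1 /\ S2 = 1 - V2 - D2 - eps / (beta * V2)).
Proof.
  cbv zeta.
  assert (Hbeta0 : beta <> 0) by (apply Rgt_not_eq; lra).
  assert (HV20 : V2 <> 0) by (apply Rgt_not_eq; lra).
  assert (Heta1 : eta <> 1) by (apply Rgt_not_eq; lra).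
  assert (Hq : 0 < eps / (beta * V2)) by (apply Rdiv_lt_0_compat; nra).
  assert (Hm : 0 < mcoef beta eps eta) by (apply mcoef_pos; auto).
  rewrite equilibrium_iff_levels, D_level_iff by (try apply Rgt_not_eq; nra).
  split.
  - intros (HO & HS & Hgb & HD).
    destruct (Omega_level_bounds eta etaD V2 S2 D2 (sigmaVSD alpha mu eps)) as [HVs HDs];
      [lra .. | assumption |].
    rewrite (Omega_level_iff_quadratic _ beta) in HO by assumption.
    destruct (quadratic_roots _ _ _ HO) as [Hdisc Hroots].
    unfold in_U. repeat split; auto; lra.
  - intros (_ & Hgb & HD & _ & _ & _ & _ & Hquad & _ & _ & _ & _ & HS).
    split; [rewrite (Omega_level_iff_quadratic _ beta) by assumption | split]; auto.
Qed.
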